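(* Let $X$, $Y_k$ ($k\in\mathbb N$) and norms $\|\cdot\|_{X\oplus Y_k}$ be as in the generalized $\ell^2$-sum setting. (A) For every $x+\sum_k y_k\in\Sigma(X\oplus Y_k)$, $$\max\Big\{\|x\|_X,\tfrac12\Big(\sum_k\|y_k\|_{Y_k}^2\Big)^{1/2}\Big\}\le\Big\|x+\sum_k y_k\Big\|_\Sigma\le\|x\|_X+\Big(\sum_k\|y_k\|_{Y_k}^2\Big)^{1/2}.$$ In particular, $(\Sigma(X\oplus Y_k),\|\cdot\|_\Sigma)$ is isomorphic to the standard $\ell^2$-sum of $X,Y_1,Y_2,\dots$. (B) The dual norm of $\|\cdot\|_\Sigma$ satisfies, for $x^*\in X^*$, $y_k^*\in Y_k^*$ with $\sum_k\|y_k^*\|_{Y_k}^2<\infty$, $$\max\Big\{\|x^*\|_X,\Big(\sum_k\|y_k^*\|_{Y_k}^2\Big)^{1/2}\Big\}\le\Big\|x^*+\sum_k y_k^*\Big\|_\Sigma\le\|x^*\|_X+2\Big(\sum_k\|y_k^*\|_{Y_k}^2\Big)^{1/2}.$$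
   Context: Setting: $(X,\|\cdot\|_X)$ and $(Y_k,\|\cdot\|_{Y_k})$, $k\in\mathbb N$, are Banach spaces; for each $k$, $\|\cdot\|_{X\oplus Y_k}$ is a norm on $X\oplus Y_k$ coinciding with $\|\cdot\|_X$ on $X$ and with $\|\cdot\|_{Y_k}$ on $Y_k$, and monotone: $\|x+y_k\|_{X\oplus Y_k}\ge\|x\|_X$. Duals of direct sums are identified with direct sums of duals via $(x^*+y^* )(x+y)=x^*(x)+y^*(y)$. $\Lambda(X\oplus Y_k)$ is the set of functionals $x^*+\sum_k\alpha_ky_k^*$ with $x^*\in X^*$, $y_k^*\in Y_k^*$, $\|x^*+y_k^*\|_{X\oplus Y_k}\le1$ for all $k$, $0\le\alpha_k\le1$, $\sum\alpha_k^2\le1$. $\Sigma(X\oplus Y_k)=\{x+y_1+y_2+\dots:x\in X,y_k\in Y_k,\sum\|y_k\|_{Y_k}^2<\infty\}$ with $\|z\|_\Sigma=\sup\{|z^*(z)|:z^*\in\Lambda(X\oplus Y_k)\}$; the dual norm is also denoted $\|\cdot\|_\Sigma$. *)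

From HB Require Import structures.
From mathcomp Require Import all_boot all_order all_algebra.
From mathcomp Require Import all_classical all_reals all_analysis.
Set Implicit Arguments. Unset Strict Implicit. Unset Printing Implicit Defensive.
Import Order.TTheory GRing.Theory Num.Theory.
Import numFieldNormedType.Exports.
Local Open Scope classical_set_scope.
Local Open Scope ring_scope.

Definition rsum (R : realType) (u : nat -> R) : R := limn (series u).

Definition summable_nn (R : realType) (u : nat -> R) : Prop := cvgn (series u).

(* Elements of the dual V^star: continuous (= bounded) linear functionals. *)
Definition dual_elt (R : realType) (V : normedModType R) (f : V -> R) : Prop :=
  (forall (a : R) (u v : V), f (a *: u + v) = a * f u + f v) /\
  exists C : R, forall v : V, `|f v| <= C * `|v|.

Definition dnorm (R : realType) (V : normedModType R) (f : V -> R) : R :=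
  sup [set r | exists v : V, `|v| <= 1 /\ r = `|f v|].

(* N is a norm on X (+) Y (given on pairs (x, y), i.e. x + y), coinciding
   with the norm of X on X and with the norm of Y on Y, and monotone. *)
Definition sum_norm (R : realType) (X Y : normedModType R) (N : X -> Y -> R) : Prop :=
  [/\ (forall x y, N x y = 0 -> x = 0 /\ y = 0),
      (forall x1 y1 x2 y2, N (x1 + x2) (y1 + y2) <= N x1 y1 + N x2 y2),
      (forall (a : R) x y, N (a *: x) (a *: y) = `|a| * N x y),
      (forall x, N x 0 = `|x|) /\ (forall y, N 0 y = `|y|) &
      (forall x y, `|x| <= N x y)].

(* Dual norm of x^star + y^star in dual of (X (+) Y, N), via (x^star+y^star)(x+y) = x^star(x)+y^star(y). *)
Definition dnorm_sum (R : realType) (X Y : normedModType R) (N : X -> Y -> R)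
  (xs : X -> R) (ys : Y -> R) : R :=
  sup [set r | exists x y, N x y <= 1 /\ r = `|xs x + ys y|].

Section Sigma.
Variables (R : realType) (X : normedModType R) (Y : nat -> normedModType R)
  (N : forall k, X -> Y k -> R).

(* y = (y_k) with sum_k ||y_k||^2 < oo, i.e. x + y_1 + y_2 + ... in Sigma. *)
Definition in_Sigma (y : forall k, Y k) : Prop :=
  summable_nn (fun k => `|y k| ^+ 2).

(* x^star + sum_k alpha_k y_k^star belongs to Lambda(X (+) Y_k). *)
Definition in_Lambda (xs : X -> R) (ys : forall k, Y k -> R) (al : nat -> R) : Prop :=
  [/\ dual_elt xs, (forall k, dual_elt (ys k)),
      (forall k, dnorm_sum (@N k) xs (ys k) <= 1),
      (forall k, 0 <= al k <= 1) &
      summable_nn (fun k => al k ^+ 2) /\ rsum (fun k => al k ^+ 2) <= 1].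

Definition Lambda_eval (xs : X -> R) (ys : forall k, Y k -> R) (al : nat -> R)
  (x : X) (y : forall k, Y k) : R :=
  xs x + rsum (fun k => al k * ys k (y k)).

Definition Sigma_norm (x : X) (y : forall k, Y k) : R :=
  sup [set r | exists xs ys al, in_Lambda xs ys al /\ r = `|Lambda_eval xs ys al x y|].

(* dual norm || x^star + sum_k y_k^star ||_Sigma, the functional acting on Sigma by
   (x + sum_k y_k) |-> x^star(x) + sum_k y_k^star(y_k). *)
Definition Sigma_dnorm (xs : X -> R) (ys : forall k, Y k -> R) : R :=
  sup [set r | exists x y, in_Sigma y /\ Sigma_norm x y <= 1 /\
                           r = `|xs x + rsum (fun k => ys k (y k))|].

Definition l2sum_norm (x : X) (y : forall k, Y k) : R :=
  Num.sqrt (`|x| ^+ 2 + rsum (fun k => `|y k| ^+ 2)).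

End Sigma.

From HB Require Import structures.
From mathcomp Require Import all_boot all_order all_algebra.
From mathcomp Require Import all_classical all_reals all_analysis.
From mathcomp Require Import ring lra.
Import Order.TTheory GRing.Theory Num.Theory.
Import numFieldNormedType.Exports.
Set Implicit Arguments. Unset Strict Implicit. Unset Printing Implicit Defensive.
Local Open Scope classical_set_scope.
Local Open Scope ring_scope.

(* A functional x^* + sum_k alpha_k y_k^* of Lambda restricts to contractions on X and on
   each Y_k, so Cauchy--Schwarz against (alpha_k) bounds the Sigma-norm by
   ||x|| + ||(y_k)||_2.  For the lower bounds test with x^* norming x, and with
   y_k^* = g_k / 2, alpha_k = ||y_k|| / ||(y_k)||_2 where g_k norms y_k: monotonicity of
   N_k gives ||y_k|| <= 2 N_k(x, y_k), hence ||y_k^*||_{N_k} <= 1.  Norming functionals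
   come from Hahn--Banach, obtained from Zorn's lemma as minimal sublinear minorants.
   Dually, the upper bound on ||x^* + sum_k y_k^*||_Sigma follows from the lower bounds
   in (A), and its lower bounds from testing on x alone and on y_k proportional to
   ||y_k^*|| times unit vectors almost norming y_k^*. *)

Lemma cauchy_schwarz_sum (R : realFieldType) (a b : nat -> R) n :
  (forall k, 0 <= a k) -> (forall k, 0 <= b k) ->
  (\sum_(k < n) a k * b k) ^+ 2 <= (\sum_(k < n) a k ^+ 2) * (\sum_(k < n) b k ^+ 2).
Proof.
move=> a0 b0; elim: n => [|n IH]; first by rewrite !big_ord0; lra.
rewrite !big_ord_recr /=; move: IH.
set P := \sum_(i < n) _; set A := \sum_(i < n) _; set B := \sum_(i < n) _.
have P0 : 0 <= P by apply: sumr_ge0 => i _; apply: mulr_ge0.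
have A0 : 0 <= A by apply: sumr_ge0 => i _; apply: sqr_ge0.
have B0 : 0 <= B by apply: sumr_ge0 => i _; apply: sqr_ge0.
have := a0 n; have := b0 n; set u := a n; set v := b n => v0 u0 IH.
have cross : 2 * P * u * v <= A * v ^+ 2 + B * u ^+ 2.
  rewrite -ler_sqr ?nnegrE ?addr_ge0 ?mulr_ge0 ?sqr_ge0 //.
  have h1 : P ^+ 2 * (u * v) ^+ 2 <= A * B * (u * v) ^+ 2 by rewrite ler_wpM2r ?sqr_ge0.
  have h2 : 0 <= (A * v ^+ 2 - B * u ^+ 2) ^+ 2 by apply: sqr_ge0.
  nra.
nra.
Qed.

Section RealSeries.
Variable R : realType.
Implicit Types u v a b : nat -> R.

Lemma series_le_rsum u n : (forall k, 0 <= u k) -> summable_nn u -> series u n <= rsum u.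
Proof.
move=> u0 cu; apply: nondecreasing_cvgn_le => //; exact: nondecreasing_series.
Qed.

Lemma rsum_ge0 u : (forall k, 0 <= u k) -> summable_nn u -> 0 <= rsum u.
Proof.
by move=> u0 cu; apply: le_trans (series_le_rsum 0 u0 cu); rewrite /series /= big_geq.
Qed.

Lemma term_le_rsum u k : (forall k, 0 <= u k) -> summable_nn u -> u k <= rsum u.
Proof.
move=> u0 cu; apply: le_trans (series_le_rsum k.+1 u0 cu).
by rewrite /series /= big_nat_recr //= lerDr; apply: sumr_ge0 => i _.
Qed.

Lemma ler_rsum u v : summable_nn u -> summable_nn v -> (forall k, u k <= v k) ->
  rsum u <= rsum v.
Proof. exact: lim_series_le. Qed.

Lemma summableZ c u : summable_nn u -> summable_nn (fun k => c * u k).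
Proof. exact: is_cvg_seriesZ. Qed.

Lemma rsumZ c u : summable_nn u -> rsum (fun k => c * u k) = c * rsum u.
Proof. exact: lim_seriesZ. Qed.

Lemma series_zero : series (fun=> 0 : R) = fun=> 0.
Proof. by apply: funext => n; rewrite /series /= big1. Qed.

Lemma summable0 : summable_nn (fun=> 0 : R).
Proof. by rewrite /summable_nn series_zero; exact: is_cvg_cst. Qed.

Lemma rsum0 : rsum (fun=> 0 : R) = 0.
Proof. by rewrite /rsum series_zero; exact: lim_cst. Qed.

Lemma summable_le u v : (forall k, 0 <= u k) -> (forall k, u k <= v k) ->
  summable_nn v -> summable_nn u.
Proof.
move=> u0 uv; apply: (series_le_cvg u0 _ uv) => k; exact: le_trans (u0 k) (uv k).
Qed.

Lemma cauchy_schwarz_rsum a b w : (forall k, 0 <= a k) -> (forall k, 0 <= b k) ->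
  summable_nn (fun k => a k ^+ 2) -> summable_nn (fun k => b k ^+ 2) ->
  (forall k, `|w k| <= a k * b k) ->
  summable_nn w /\
  `|rsum w| <= Num.sqrt (rsum (fun k => a k ^+ 2)) * Num.sqrt (rsum (fun k => b k ^+ 2)).
Proof.
move=> a0 b0 ca cb hw.
have a20 k : 0 <= a k ^+ 2 by apply: sqr_ge0.
have b20 k : 0 <= b k ^+ 2 by apply: sqr_ge0.
have ab0 k : 0 <= a k * b k by apply: mulr_ge0.
set M := _ * _.
have partial n : series (fun k => a k * b k) n <= M.
  rewrite seriesEord -[leLHS]ger0_norm ?sumr_ge0 // -sqrtr_sqr.
  rewrite /M -sqrtrM ?rsum_ge0 // ler_sqrt ?mulr_ge0 ?rsum_ge0 //.
  apply: le_trans (cauchy_schwarz_sum n a0 b0) _.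
  have := series_le_rsum n a20 ca; have := series_le_rsum n b20 cb; rewrite !seriesEord.
  by move=> hB hA; apply: ler_pM => //; apply: sumr_ge0.
have cab : summable_nn (fun k => a k * b k).
  apply: nondecreasing_is_cvgn; first exact: nondecreasing_series.
  by exists M => _ [n _ <-].
have cnw : cvgn [normed series w] by apply: series_le_cvg hw cab.
split; first exact: normed_cvg.
apply: le_trans (lim_series_norm cnw) _; apply: limr_le => //; near=> n.
by apply: le_trans (partial n); apply: ler_sum => i _; exact: hw.
Unshelve. all: by end_near. Qed.

End RealSeries.

Lemma le_of_mul_lt1 (R : realFieldType) (a b : R) : 0 <= a -> 0 <= b ->
  (forall t, 0 < t -> t < 1 -> t * a <= b) -> a <= b.
Proof.
move=> a0 b0 h; apply/ler_addgt0Pr => e e0.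
have [ea|ae] := leP a e; first by lra.
have apos : 0 < a by lra.
have := h (1 - e / a); rewrite subr_gt0 ltr_pdivrMr // mul1r => /(_ ae).
rewrite ltrBlDr ltrDl divr_gt0 // => /(_ isT).
rewrite mulrBl mul1r mulrAC -mulrA mulfV ?gt_eqF // mulr1; lra.
Qed.

Lemma sqrt_sqrD_le (R : rcfType) (a s : R) : 0 <= a -> 0 <= s ->
  Num.sqrt (a ^+ 2 + s) <= a + Num.sqrt s.
Proof.
move=> a0 s0; rewrite -ler_sqr ?nnegrE ?addr_ge0 ?sqrtr_ge0 //.
rewrite sqr_sqrtr ?addr_ge0 ?sqr_ge0 //.
by have := sqr_sqrtr s0; have := sqrtr_ge0 s; nra.
Qed.

Lemma le_sqrt_sqrDl (R : rcfType) (a s : R) : 0 <= a -> 0 <= s -> a <= Num.sqrt (a ^+ 2 + s).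
Proof.
move=> a0 s0; rewrite -{1}(ger0_norm a0) -sqrtr_sqr ler_sqrt ?addr_ge0 ?sqr_ge0 //.
by rewrite lerDl.
Qed.

Lemma le_sqrt_sqrDr (R : rcfType) (a s : R) : 0 <= s -> Num.sqrt s <= Num.sqrt (a ^+ 2 + s).
Proof. by move=> s0; rewrite ler_sqrt ?addr_ge0 ?sqr_ge0 // lerDr sqr_ge0. Qed.

Section DualElements.
Variables (R : realType) (V : normedModType R).
Implicit Types f : V -> R.

Definition linear_functional f := forall a u v, f (a *: u + v) = a * f u + f v.

Lemma linear_functional0 f : linear_functional f -> f 0 = 0.
Proof.
move=> lin; have := lin 1 0 0; rewrite scale1r addr0 mul1r => h.
by apply: (@addrI _ (f 0)); rewrite addr0 -h.
Qed.

Lemma linear_functionalZ f a u : linear_functional f -> f (a *: u) = a * f u.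
Proof. by move=> lin; have := lin a u 0; rewrite addr0 linear_functional0 // addr0. Qed.

Lemma linear_functionalN f u : linear_functional f -> f (- u) = - f u.
Proof. by move=> lin; rewrite -scaleN1r linear_functionalZ // mulN1r. Qed.

Lemma dual_elt0 f : dual_elt f -> f 0 = 0.
Proof. by case=> /linear_functional0. Qed.

Lemma dual_eltZ f a u : dual_elt f -> f (a *: u) = a * f u.
Proof. by case=> /linear_functionalZ. Qed.

Lemma dual_eltN f u : dual_elt f -> f (- u) = - f u.
Proof. by case=> /linear_functionalN. Qed.

Lemma dual_elt_zero : dual_elt (fun _ : V => 0 : R).
Proof. by split; [move=> *; rewrite mulr0 addr0 | exists 0 => v; rewrite normr0 mul0r]. Qed.

Lemma dual_elt_scale f c : dual_elt f -> dual_elt (fun v => c * f v).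
Proof.
move=> [lin [C hC]]; split; first by move=> a u v; rewrite lin mulrDr mulrCA.
by exists (`|c| * C) => v; rewrite normrM -mulrA ler_wpM2l.
Qed.

Lemma dual_elt_contraction f : linear_functional f ->
  (forall v, `|f v| <= `|v|) -> dual_elt f.
Proof. by move=> lin h; split => //; exists 1 => v; rewrite mul1r. Qed.

Lemma dnorm_has_ubound f : dual_elt f ->
  has_ubound [set r | exists v : V, `|v| <= 1 /\ r = `|f v|].
Proof.
move=> [_ [C hC]]; exists `|C| => _ [v [v1 ->]].
apply: le_trans (hC v) (le_trans (ler_norm _) _); rewrite normrM normr_id.
by rewrite -[leRHS]mulr1 ler_wpM2l.
Qed.

Lemma dnorm_ge0 f : dual_elt f -> 0 <= dnorm f.
Proof.
move=> df; apply: le_trans (normr_ge0 (f 0)) (ub_le_sup (dnorm_has_ubound df) _).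
by exists 0; rewrite normr0.
Qed.

Lemma dnorm_ler f v : dual_elt f -> `|f v| <= dnorm f * `|v|.
Proof.
move=> df; have [->|v0] := eqVneq v 0; first by rewrite dual_elt0 // !normr0 mulr0.
have nv : 0 < `|v| by rewrite normr_gt0.
have : `|f (`|v|^-1 *: v)| <= dnorm f.
  apply: (ub_le_sup (dnorm_has_ubound df)); exists (`|v|^-1 *: v); split => //.
  by rewrite normrZ ger0_norm ?invr_ge0 // mulVf ?gt_eqF.
by rewrite dual_eltZ // normrM ger0_norm ?invr_ge0 // -ler_pdivlMl ?invr_gt0 // invrK mulrC.
Qed.

Lemma dnorm_approx f e : dual_elt f -> 0 < e ->
  exists v : V, `|v| <= 1 /\ dnorm f - e <= f v.
Proof.
move=> df e0; have hs : has_sup [set r | exists v : V, `|v| <= 1 /\ r = `|f v|].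
  by split; [exists `|f 0|, 0; rewrite normr0 | exact: dnorm_has_ubound].
have [_ [v [v1 ->]] /ltW hv] := sup_adherent e0 hs.
have [fv0|fv0] := leP 0 (f v); first by exists v; rewrite -(ger0_norm fv0).
by exists (- v); rewrite normrN dual_eltN // -(ltr0_norm fv0).
Qed.

End DualElements.

Section SumNorms.
Variables (R : realType) (X Y : normedModType R) (N : X -> Y -> R).
Hypothesis HN : sum_norm N.

Lemma sum_normD x1 y1 x2 y2 : N (x1 + x2) (y1 + y2) <= N x1 y1 + N x2 y2.
Proof. by case: HN. Qed.

Lemma sum_normZ a x y : N (a *: x) (a *: y) = `|a| * N x y.
Proof. by case: HN. Qed.

Lemma sum_norm_l x : N x 0 = `|x|.
Proof. by case: HN => _ _ _ []. Qed.

Lemma sum_norm_r y : N 0 y = `|y|.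
Proof. by case: HN => _ _ _ []. Qed.

Lemma sum_norm_ge_l x y : `|x| <= N x y.
Proof. by case: HN. Qed.

(* [N 0 y <= N x y + N (- x) 0] by the triangle inequality, then monotonicity. *)
Lemma sum_norm_ge_r x y : `|y| <= 2 * N x y.
Proof.
have := sum_normD x y (- x) 0; rewrite subrr addr0 sum_norm_r sum_norm_l normrN.
have := sum_norm_ge_l x y; lra.
Qed.

Lemma sum_norm_ge0 x y : 0 <= N x y.
Proof. exact: le_trans (normr_ge0 x) (sum_norm_ge_l x y). Qed.

Lemma dnorm_sum_le xs ys M : 0 <= M -> (forall x y, `|xs x + ys y| <= M * N x y) ->
  dnorm_sum N xs ys <= M.
Proof.
move=> M0 h; apply: ge_sup; first by exists `|xs 0 + ys 0|, 0, 0; rewrite sum_norm_l normr0.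
by move=> _ [x [y [n1 ->]]]; apply: le_trans (h x y) _; rewrite -[leRHS]mulr1 ler_wpM2l.
Qed.

Lemma dnorm_sum_ler xs ys x y : dual_elt xs -> dual_elt ys ->
  dnorm_sum N xs ys <= 1 -> `|xs x + ys y| <= N x y.
Proof.
move=> dx dy h1.
have hub : has_ubound [set r | exists x y, N x y <= 1 /\ r = `|xs x + ys y|].
  exists (dnorm xs + 2 * dnorm ys) => _ [x' [y' [n1 ->]]].
  apply: le_trans (ler_normD _ _) _.
  have := dnorm_ler x' dx; have := dnorm_ler y' dy.
  have := sum_norm_ge_l x' y'; have := sum_norm_ge_r x' y'.
  have := dnorm_ge0 dx; have := dnorm_ge0 dy; have := normr_ge0 x'; have := normr_ge0 y'.
  nra.
have [n0|n0] := eqVneq (N x y) 0.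
  have [-> ->] : x = 0 /\ y = 0 by case: HN => h _ _ _ _; exact: h.
  by rewrite (dual_elt0 dx) (dual_elt0 dy) addr0 normr0 sum_norm_ge0.
have np : 0 < N x y by rewrite lt_def n0 sum_norm_ge0.
have : `|xs ((N x y)^-1 *: x) + ys ((N x y)^-1 *: y)| <= 1.
  apply: le_trans h1; apply: (ub_le_sup hub).
  by exists ((N x y)^-1 *: x), ((N x y)^-1 *: y); rewrite sum_normZ gtr0_norm ?invr_gt0 // mulVf.
rewrite (dual_eltZ _ x dx) (dual_eltZ _ y dy) -mulrDr normrM gtr0_norm ?invr_gt0 //.
by rewrite -ler_pdivlMl ?invr_gt0 // invrK mulr1.
Qed.

End SumNorms.

Section HahnBanach.
Variables (R : realType) (V : normedModType R).
Implicit Types p q : V -> R.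

Definition sublinear q :=
  [/\ forall u v, q (u + v) <= q u + q v,
      forall (a : R) u, 0 < a -> q (a *: u) <= a * q u & q 0 = 0].

Lemma sublinearZ q a u : sublinear q -> 0 <= a -> q (a *: u) = a * q u.
Proof.
move=> [_ hq q0]; rewrite le_eqVlt => /predU1P[<-|a0]; first by rewrite scale0r q0 mul0r.
apply/eqP; rewrite eq_le hq //=.
have := hq a^-1 (a *: u); rewrite invr_gt0 scalerA mulVf ?gt_eqF // scale1r.
by move=> /(_ a0); rewrite ler_pdivlMl.
Qed.

Lemma sublinear_ge_oppN q u : sublinear q -> - q (- u) <= q u.
Proof. by move=> [hs _ q0]; have := hs u (- u); rewrite subrr q0 lerNl; lra. Qed.

Lemma sublinear_norm : sublinear (fun v : V => `|v|).
Proof. by split; [exact: ler_normD | move=> a u a0; rewrite normrZ gtr0_norm | exact: normr0]. Qed.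

(* A sublinear minorant of [q] whose value at [- v] is at most [- q v]; a minimal
   sublinear minorant of [q] therefore coincides with it and is odd along [v]. *)
Definition shrink q v u := inf [set q (u + t *: v) - t * q v | t in [set t : R | 0 <= t]].

Section Shrink.
Variables (q : V -> R) (v : V).
Hypothesis sq : sublinear q.

Lemma shrink_has_lbound u :
  has_lbound [set q (u + t *: v) - t * q v | t in [set t : R | 0 <= t]].
Proof.
exists (- q (- u)) => _ [t t0 <-]; rewrite -(sublinearZ v sq t0).
by have [hs _ _] := sq; have := hs (u + t *: v) (- u); rewrite addrC addKr; lra.
Qed.

Lemma shrink_le u t : 0 <= t -> shrink q v u <= q (u + t *: v) - t * q v.
Proof. by move=> t0; apply: (ge_inf (shrink_has_lbound u)); exists t. Qed.

Lemma shrink_ge u b : (forall t, 0 <= t -> b <= q (u + t *: v) - t * q v) ->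
  b <= shrink q v u.
Proof.
move=> h; apply: lb_le_inf.
  by exists (q u), 0; [exact: lexx | rewrite scale0r addr0 mul0r subr0].
by move=> _ [t t0 <-]; exact: h.
Qed.

Lemma shrink_le_self u : shrink q v u <= q u.
Proof. by have := shrink_le u (lexx 0); rewrite scale0r addr0 mul0r subr0. Qed.

Lemma shrink_oppr : shrink q v (- v) <= - q v.
Proof.
have := shrink_le (- v) ler01; rewrite scale1r addNr mul1r.
by case: sq => _ _ ->; rewrite add0r.
Qed.

Lemma sublinear_shrink : sublinear (shrink q v).
Proof.
have [hs hh q0] := sq; split.
- move=> u1 u2.
  suff : shrink q v (u1 + u2) - shrink q v u2 <= shrink q v u1 by lra.
  apply: shrink_ge => t1 t10.
  suff : shrink q v (u1 + u2) - (q (u1 + t1 *: v) - t1 * q v) <= shrink q v u2 by lra.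
  apply: shrink_ge => t2 t20.
  suff : shrink q v (u1 + u2) <= q (u1 + t1 *: v) - t1 * q v + (q (u2 + t2 *: v) - t2 * q v).
    by lra.
  apply: le_trans (shrink_le _ (addr_ge0 t10 t20)) _.
  have := hs (u1 + t1 *: v) (u2 + t2 *: v); rewrite addrACA -scalerDl mulrDl; lra.
- move=> a u a0; rewrite -ler_pdivrMl //; apply: shrink_ge => t t0.
  rewrite ler_pdivrMl //; apply: le_trans (shrink_le _ (mulr_ge0 (ltW a0) t0)) _.
  by rewrite -scalerA -scalerDr (sublinearZ _ sq (ltW a0)) -mulrA mulrBr.
- apply/eqP; rewrite eq_le; apply/andP; split; first by have := shrink_le_self 0; rewrite q0.
  by apply: shrink_ge => t t0; rewrite add0r (sublinearZ _ sq t0) subrr.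
Qed.

End Shrink.

Section ChainInf.
Variables (A : set (V -> R)) (lb : V -> R).
Hypotheses (A0 : A !=set0) (A_sublinear : forall q, A q -> sublinear q)
  (A_lb : forall q u, A q -> lb u <= q u)
  (A_total : forall q1 q2, A q1 -> A q2 ->
     (forall u, q1 u <= q2 u) \/ (forall u, q2 u <= q1 u)).

Definition chain_inf u := inf [set q u | q in A].

Lemma chain_inf_le q u : A q -> chain_inf u <= q u.
Proof. by move=> Aq; apply: ge_inf; [exists (lb u) => _ [q' Aq' <-]; exact: A_lb | exists q]. Qed.

Lemma chain_inf_ge u b : (forall q, A q -> b <= q u) -> b <= chain_inf u.
Proof.
have [q0 Aq0] := A0.
by move=> h; apply: lb_le_inf; [exists (q0 u), q0 | move=> _ [q Aq <-]; exact: h].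
Qed.

(* Two members of a chain are comparable, so the smaller one witnesses subadditivity. *)
Lemma sublinear_chain_inf : sublinear chain_inf.
Proof.
split.
- move=> u v; suff : chain_inf (u + v) - chain_inf v <= chain_inf u by lra.
  apply: chain_inf_ge => q1 Aq1; suff : chain_inf (u + v) - q1 u <= chain_inf v by lra.
  apply: chain_inf_ge => q2 Aq2; suff : chain_inf (u + v) <= q1 u + q2 v by lra.
  have [[s1 _ _] [s2 _ _]] := (A_sublinear Aq1, A_sublinear Aq2).
  have [h|h] := A_total Aq1 Aq2.
  + by apply: le_trans (chain_inf_le _ Aq1) (le_trans (s1 u v) _); rewrite lerD2l.
  + by apply: le_trans (chain_inf_le _ Aq2) (le_trans (s2 u v) _); rewrite lerD2r.
- move=> a u a0; rewrite -ler_pdivrMl //; apply: chain_inf_ge => q Aq.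
  rewrite ler_pdivrMl //; apply: le_trans (chain_inf_le _ Aq) _.
  by have [_ hh _] := A_sublinear Aq; exact: hh.
- have [q0 Aq0] := A0; have z q : A q -> q 0 = 0 by case/A_sublinear.
  apply/eqP; rewrite eq_le; apply/andP; split.
  + by rewrite -(z q0 Aq0); exact: chain_inf_le.
  + by apply: chain_inf_ge => q Aq; rewrite z.
Qed.

End ChainInf.

Definition minimal_sublinear_minorant p q :=
  [/\ sublinear q, forall u, q u <= p u &
      forall q', sublinear q' -> (forall u, q' u <= q u) -> q' = q].

Lemma exists_minimal_sublinear_minorant p : sublinear p ->
  exists q, minimal_sublinear_minorant p q.
Proof.
move=> sp; pose T := {q : V -> R | sublinear q /\ forall u, q u <= p u}.
pose below (s t : T) := `[< forall u, sval t u <= sval s u >].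
have [[q [sq qp]] qmin] : exists t : T, forall s, below t s -> s = t.
  apply: Zorn.
  - by move=> t; apply/asboolP.
  - by move=> r s t /asboolP h1 /asboolP h2; apply/asboolP => u; exact: le_trans (h2 u) (h1 u).
  - move=> [s hs] [t ht] /asboolP h1 /asboolP h2.
    have E : s = t by apply: funext => u; apply/eqP; rewrite eq_le h1 h2.
    by subst t; congr exist; exact: Prop_irrelevance.
  - move=> A Atot; have [[s0 As0]|A0] := pselect (exists s, A s); last first.
      by exists (exist _ p (conj sp (fun u => lexx _))) => s As; exfalso; apply: A0; exists s.
    pose B := [set sval s | s in A].
    have B_lb q u : B q -> - p (- u) <= q u.
      move=> [[q' [sq' q'p]] _ <-] /=.
      by apply: le_trans (sublinear_ge_oppN u sq'); rewrite lerN2.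
    have B_total q1 q2 : B q1 -> B q2 -> (forall u, q1 u <= q2 u) \/ (forall u, q2 u <= q1 u).
      by move=> [s1 As1 <-] [s2 As2 <-]; case: (Atot s1 s2 As1 As2) => /asboolP; [right | left].
    have B0 : B !=set0 by exists (sval s0), s0.
    have Bsub q : B q -> sublinear q by move=> [s _ <-]; case: (svalP s).
    have sB := sublinear_chain_inf B0 Bsub B_lb B_total.
    have Bp u : chain_inf B u <= p u.
      by apply: le_trans (chain_inf_le B_lb u (ex_intro2 _ _ s0 As0 erefl)) _; case: s0 {As0} => ? [].
    exists (exist _ (chain_inf B) (conj sB Bp)) => s As; apply/asboolP => u /=.
    by apply: (chain_inf_le B_lb); exists s.
exists q; split => // q' sq' q'q.
have q'p u : q' u <= p u by exact: le_trans (q'q u) (qp u).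
have := qmin (exist _ q' (conj sq' q'p)) (asboolT q'q).
by move=> [].
Qed.

Lemma minimal_sublinear_minorant_linear p q : minimal_sublinear_minorant p q ->
  linear_functional q.
Proof.
move=> [sq _ qmin]; have [hs _ q0] := sq.
have qN v : q (- v) = - q v.
  have E := qmin _ (sublinear_shrink v sq) (shrink_le_self v sq).
  apply/eqP; rewrite eq_le -{1}E shrink_oppr //=.
  by rewrite lerNl sublinear_ge_oppN.
have qD u v : q (u + v) = q u + q v.
  apply/eqP; rewrite eq_le hs /=; have := hs (- u) (- v); rewrite -opprD !qN; lra.
have qZ (a : R) u : q (a *: u) = a * q u.
  have [a0|a0|->] := ltgtP a 0; last by rewrite scale0r mul0r.
  - by rewrite -[a *: u]opprK -scaleNr qN (sublinearZ _ sq) ?oppr_ge0 ?ltW // mulNr opprK.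
  - exact/sublinearZ/ltW.
by move=> a u v; rewrite qD qZ.
Qed.

(* Hahn--Banach: a linear minorant of [shrink] of the norm along [x]. *)
Lemma exists_norming_functional x :
  exists f : V -> R, [/\ dual_elt f, forall v, `|f v| <= `|v| & f x = `|x|].
Proof.
have sp := sublinear_shrink x sublinear_norm.
have [q qmin] := exists_minimal_sublinear_minorant sp.
have lin := minimal_sublinear_minorant_linear qmin.
have [_ qp _] := qmin.
have qnorm v : q v <= `|v| by apply: le_trans (qp v) (shrink_le_self _ sublinear_norm _).
have qbound v : `|q v| <= `|v|.
  by rewrite ler_norml qnorm andbT lerNl -linear_functionalN // -(normrN v) qnorm.
exists q; split => //; first exact: dual_elt_contraction.
apply/eqP; rewrite eq_le qnorm /= -lerN2 -linear_functionalN //.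
exact: le_trans (qp _) (shrink_oppr _ sublinear_norm).
Qed.

End HahnBanach.

Section SigmaNorm.
Variables (R : realType) (X : normedModType R) (Y : nat -> normedModType R)
  (N : forall k, X -> Y k -> R).
Arguments N : clear implicits.
Hypothesis HN : forall k, sum_norm (N k).

Local Notation ssq y := (rsum (fun k => `|y k| ^+ 2)).

Lemma ssq_ge0 (y : forall k, Y k) : in_Sigma y -> 0 <= ssq y.
Proof. by apply: rsum_ge0 => k; apply: sqr_ge0. Qed.

Lemma in_Sigma0 : in_Sigma (fun k => 0 : Y k).
Proof. by rewrite /in_Sigma; under eq_fun do rewrite normr0 expr0n; exact: summable0. Qed.

Lemma ssq0 : ssq (fun k => 0 : Y k) = 0.
Proof. by under eq_fun do rewrite normr0 expr0n; exact: rsum0. Qed.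

Lemma in_Lambda_contraction xs ys al : in_Lambda N xs ys al ->
  (forall x, `|xs x| <= `|x|) /\ (forall k v, `|ys k v| <= `|v|).
Proof.
move=> [dx dys hd _ _]; split.
- move=> x; have := dnorm_sum_ler (HN 0) x 0 dx (dys 0) (hd 0).
  by rewrite (dual_elt0 (dys 0)) addr0 sum_norm_l.
- move=> k v; have := dnorm_sum_ler (HN k) 0 v dx (dys k) (hd k).
  by rewrite (dual_elt0 dx) add0r sum_norm_r.
Qed.

Lemma Lambda_eval_le xs ys al x (y : forall k, Y k) :
  in_Lambda N xs ys al -> in_Sigma y ->
  `|Lambda_eval xs ys al x y| <= `|x| + Num.sqrt (ssq y).
Proof.
move=> hL sy; have [hx hy] := in_Lambda_contraction hL.
have [_ _ _ hal [cal ral]] := hL.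
have a0 k : 0 <= al k by case/andP: (hal k).
have hw k : `|al k * ys k (y k)| <= al k * `|y k|.
  by rewrite normrM ger0_norm // ler_wpM2l.
have [_ cs] := cauchy_schwarz_rsum a0 (fun k => normr_ge0 (y k)) cal sy hw.
apply: le_trans (ler_normD _ _) (lerD (hx x) (le_trans cs _)).
by rewrite ler_piMl ?sqrtr_ge0 // -sqrtr1 ler_sqrt.
Qed.

Lemma in_Lambda_zero : in_Lambda N (fun=> 0) (fun k _ => 0) (fun=> 0).
Proof.
split; [exact: dual_elt_zero | move=> k; exact: dual_elt_zero | | | ].
- by move=> k; apply: dnorm_sum_le => // x y; rewrite addr0 normr0 mul1r sum_norm_ge0.
- by move=> k; rewrite lexx ler01.
- by under eq_fun do rewrite expr0n; rewrite rsum0; split; [exact: summable0 | ].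
Qed.

Lemma Sigma_norm_has_ubound x (y : forall k, Y k) : in_Sigma y ->
  has_ubound [set r | exists xs ys al,
    in_Lambda N xs ys al /\ r = `|Lambda_eval xs ys al x y|].
Proof.
move=> sy; exists (`|x| + Num.sqrt (ssq y)) => _ [xs [ys [al [hL ->]]]].
exact: Lambda_eval_le.
Qed.

Lemma Sigma_norm_le x (y : forall k, Y k) : in_Sigma y ->
  Sigma_norm N x y <= `|x| + Num.sqrt (ssq y).
Proof.
move=> sy; apply: ge_sup; last by move=> _ [xs [ys [al [hL ->]]]]; exact: Lambda_eval_le.
exists `|Lambda_eval (fun=> 0) (fun k _ => 0) (fun=> 0) x y|.
by exists (fun=> 0), (fun k _ => 0), (fun=> 0); split => //; exact: in_Lambda_zero.
Qed.

Lemma Lambda_eval_le_Sigma_norm xs ys al x (y : forall k, Y k) :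
  in_Sigma y -> in_Lambda N xs ys al -> `|Lambda_eval xs ys al x y| <= Sigma_norm N x y.
Proof. by move=> sy hL; apply: (ub_le_sup (Sigma_norm_has_ubound x sy)); exists xs, ys, al. Qed.

Lemma Sigma_norm_ge_l x (y : forall k, Y k) : in_Sigma y -> `|x| <= Sigma_norm N x y.
Proof.
move=> sy; have [f [df fb fx]] := exists_norming_functional x.
have hL : in_Lambda N f (fun k _ => 0) (fun=> 0).
  have [_ d0 _ h1 h2] := in_Lambda_zero; split => // k.
  apply: dnorm_sum_le => // x' y'; rewrite addr0 mul1r.
  exact: le_trans (fb x') (sum_norm_ge_l (HN k) x' y').
have := Lambda_eval_le_Sigma_norm x sy hL; rewrite /Lambda_eval.
by under eq_fun do rewrite mul0r; rewrite rsum0 addr0 fx normr_id.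
Qed.

(* [y_k^* = g_k / 2] with [g_k] norming [y_k]; the factor [1/2] makes
   [||x^* + y_k^*|| <= 1] since [||y|| <= 2 N x y]. *)
Lemma exists_half_norming_Lambda (y : forall k, Y k) : in_Sigma y -> 0 < ssq y ->
  exists ys, in_Lambda N (fun=> 0) ys (fun k => `|y k| / Num.sqrt (ssq y)) /\
             forall k, ys k (y k) = 2^-1 * `|y k|.
Proof.
move=> sy Spos; have sq0 : 0 < Num.sqrt (ssq y) by rewrite sqrtr_gt0.
pose g k := sval (cid (exists_norming_functional (y k))).
have gP k : [/\ dual_elt (g k), forall v, `|g k v| <= `|v| & g k (y k) = `|y k|].
  exact: svalP (cid (exists_norming_functional (y k))).
exists (fun k v => 2^-1 * g k v); split; last by move=> k; have [_ _ ->] := gP k.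
have [d0 _ _ _ _] := in_Lambda_zero; split => //.
- by move=> k; apply: dual_elt_scale; have [] := gP k.
- move=> k; apply: dnorm_sum_le => // x' v; rewrite add0r mul1r normrM.
  have [_ b _] := gP k; have := b v; have := sum_norm_ge_r (HN k) x' v.
  rewrite ger0_norm ?invr_ge0 //; lra.
- move=> k; rewrite divr_ge0 ?sqrtr_ge0 //= ler_pdivrMr // mul1r.
  rewrite -(ger0_norm (normr_ge0 (y k))) -sqrtr_sqr ler_sqrt ?ssq_ge0 //.
  exact: (term_le_rsum k (fun k => sqr_ge0 _) sy).
- under eq_fun do rewrite /= expr_div_n (sqr_sqrtr (ssq_ge0 sy)) mulrC.
  by rewrite rsumZ // mulVf ?gt_eqF //; split; [exact: summableZ |].
Qed.

Lemma Sigma_norm_ge_r x (y : forall k, Y k) : in_Sigma y ->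
  2^-1 * Num.sqrt (ssq y) <= Sigma_norm N x y.
Proof.
move=> sy; have [S0|Spos] := eqVneq (ssq y) 0.
  by rewrite S0 sqrtr0 mulr0; exact: le_trans (normr_ge0 x) (Sigma_norm_ge_l x sy).
have {}Spos : 0 < ssq y by rewrite lt_def Spos ssq_ge0.
have sq0 : 0 < Num.sqrt (ssq y) by rewrite sqrtr_gt0.
have [ys [hL ysy]] := exists_half_norming_Lambda sy Spos.
have := Lambda_eval_le_Sigma_norm x sy hL; rewrite /Lambda_eval add0r.
have -> : (fun k => `|y k| / Num.sqrt (ssq y) * ys k (y k)) =
          (fun k => (2 * Num.sqrt (ssq y))^-1 * `|y k| ^+ 2).
  by apply: funext => k; rewrite ysy invfM; field; rewrite gt_eqF.
rewrite rsumZ // ger0_norm ?mulr_ge0 ?invr_ge0 ?mulr_ge0 ?sqrtr_ge0 ?ssq_ge0 //.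
apply: le_trans; rewrite invfM -mulrA -{3}(sqr_sqrtr (ssq_ge0 sy)) expr2 mulKf ?gt_eqF //.
Qed.

Lemma Sigma_norm_equiv_l2sum x (y : forall k, Y k) : in_Sigma y ->
  4^-1 * l2sum_norm x y <= Sigma_norm N x y /\ Sigma_norm N x y <= 2 * l2sum_norm x y.
Proof.
move=> sy; rewrite /l2sum_norm.
have S0 := ssq_ge0 sy; have x0 := normr_ge0 x.
have := sqrt_sqrD_le x0 S0; have := le_sqrt_sqrDl x0 S0; have := le_sqrt_sqrDr `|x| S0.
have := Sigma_norm_ge_l x sy; have := Sigma_norm_ge_r x sy; have := Sigma_norm_le x sy.
split; lra.
Qed.

Section DualNorm.
Variables (xs : X -> R) (ys : forall k, Y k -> R).
Arguments ys : clear implicits.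
Hypotheses (dx : dual_elt xs) (dys : forall k, dual_elt (ys k))
  (cT : summable_nn (fun k => dnorm (ys k) ^+ 2)).

Local Notation T := (rsum (fun k => dnorm (ys k) ^+ 2)).

Let dnorm_ys_ge0 k : 0 <= dnorm (ys k) := dnorm_ge0 (dys k).

Lemma Sigma_eval_le x (y : forall k, Y k) : in_Sigma y -> Sigma_norm N x y <= 1 ->
  `|xs x + rsum (fun k => ys k (y k))| <= dnorm xs + 2 * Num.sqrt T.
Proof.
move=> sy s1.
have [_ cs] := cauchy_schwarz_rsum dnorm_ys_ge0 (fun k => normr_ge0 (y k)) cT sy
  (fun k => dnorm_ler (y k) (dys k)).
have hx := Sigma_norm_ge_l x sy; have hy := Sigma_norm_ge_r x sy.
apply: le_trans (ler_normD _ _) _.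
have := dnorm_ler x dx; have := dnorm_ge0 dx.
have := sqrtr_ge0 T; have := sqrtr_ge0 (ssq y); have := normr_ge0 x.
nra.
Qed.

Lemma Sigma_dnorm_has_ubound : has_ubound [set r | exists x y,
  in_Sigma y /\ Sigma_norm N x y <= 1 /\ r = `|xs x + rsum (fun k => ys k (y k))|].
Proof.
by exists (dnorm xs + 2 * Num.sqrt T) => _ [x [y [sy [s1 ->]]]]; exact: Sigma_eval_le.
Qed.

Lemma Sigma_dnorm_ge x (y : forall k, Y k) : in_Sigma y -> Sigma_norm N x y <= 1 ->
  `|xs x + rsum (fun k => ys k (y k))| <= Sigma_dnorm N xs ys.
Proof. by move=> sy s1; apply: (ub_le_sup Sigma_dnorm_has_ubound); exists x, y. Qed.

Lemma Sigma_dnorm_le : Sigma_dnorm N xs ys <= dnorm xs + 2 * Num.sqrt T.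
Proof.
apply: ge_sup; last by move=> _ [x [y [sy [s1 ->]]]]; exact: Sigma_eval_le.
exists `|xs 0 + rsum (fun k => ys k 0)|, 0, (fun k => 0); split; first exact: in_Sigma0.
split => //; apply: le_trans (Sigma_norm_le 0 in_Sigma0) _.
by rewrite ssq0 sqrtr0 normr0 addr0.
Qed.

Lemma Sigma_dnorm_ge_l : dnorm xs <= Sigma_dnorm N xs ys.
Proof.
apply: ge_sup; first by exists `|xs 0|, 0; rewrite normr0.
move=> _ [v [v1 ->]]; have := Sigma_dnorm_ge (x := v) in_Sigma0.
under eq_fun do rewrite (dual_elt0 (dys _)).
rewrite rsum0 addr0; apply; apply: le_trans (Sigma_norm_le v in_Sigma0) _.
by rewrite ssq0 sqrtr0 addr0.
Qed.

(* Take [y_k = (||y_k^*|| / sqrt T) v_k] with [v_k] a unit vector on which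
   [y_k^*] nearly attains its norm. *)
Lemma exists_almost_norming (t : R) : 0 < t -> t < 1 -> 0 < T ->
  exists y : forall k, Y k, [/\ in_Sigma y, ssq y <= 1,
    summable_nn (fun k => ys k (y k)) & t * Num.sqrt T <= rsum (fun k => ys k (y k))].
Proof.
move=> t0 t1 Tpos; have sq0 : 0 < Num.sqrt T by rewrite sqrtr_gt0.
have hv k : exists v : Y k, `|v| <= 1 /\ t * dnorm (ys k) <= ys k v.
  have [D0|Dpos] := eqVneq (dnorm (ys k)) 0.
    by exists 0; rewrite normr0 ler01 D0 mulr0 (dual_elt0 (dys k)).
  have Dpos' : 0 < dnorm (ys k) by rewrite lt_def Dpos dnorm_ys_ge0.
  have e0 : 0 < (1 - t) * dnorm (ys k) by rewrite mulr_gt0 // subr_gt0.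
  have [v [v1 hv]] := dnorm_approx (dys k) e0.
  by exists v; split => //; apply: le_trans hv; lra.
pose v k := sval (cid (hv k)).
have vP k : `|v k| <= 1 /\ t * dnorm (ys k) <= ys k (v k) by exact: svalP (cid (hv k)).
pose c k := dnorm (ys k) / Num.sqrt T.
have c0 k : 0 <= c k by rewrite divr_ge0 ?dnorm_ys_ge0 ?sqrtr_ge0.
have ny2 k : `|c k *: v k| ^+ 2 <= T^-1 * dnorm (ys k) ^+ 2.
  have -> : T^-1 * dnorm (ys k) ^+ 2 = c k ^+ 2.
    by rewrite /c expr_div_n sqr_sqrtr ?ltW // mulrC.
  rewrite normrZ ger0_norm // ler_sqr ?nnegrE ?mulr_ge0 ?dnorm_ys_ge0 //.
  by rewrite ler_piMr //; case: (vP k).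
have sy : in_Sigma (fun k => c k *: v k).
  by apply: (summable_le _ ny2 (summableZ cT)) => k; apply: sqr_ge0.
have [cw _] := cauchy_schwarz_rsum dnorm_ys_ge0 (fun k => normr_ge0 _) cT sy
  (fun k => dnorm_ler _ (dys k)).
have ysv k : (t / Num.sqrt T) * dnorm (ys k) ^+ 2 <= ys k (c k *: v k).
  rewrite (dual_eltZ _ _ (dys k)).
  have -> : t / Num.sqrt T * dnorm (ys k) ^+ 2 = c k * (t * dnorm (ys k)).
    by rewrite /c expr2; field; rewrite gt_eqF.
  by rewrite ler_wpM2l //; case: (vP k).
exists (fun k => c k *: v k); split => //.
- apply: le_trans (ler_rsum sy (summableZ cT) ny2) _.
  by rewrite rsumZ // mulVf ?gt_eqF.
- apply: le_trans (ler_rsum (summableZ cT) cw ysv); rewrite rsumZ //.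
  by rewrite -{3}(sqr_sqrtr (ltW Tpos)) expr2 mulrA divfK ?gt_eqF.
Qed.

Lemma Sigma_dnorm_ge_r : Num.sqrt T <= Sigma_dnorm N xs ys.
Proof.
have T0 : 0 <= T := rsum_ge0 (fun k => sqr_ge0 _) cT.
have S0 : 0 <= Sigma_dnorm N xs ys := le_trans (dnorm_ge0 dx) Sigma_dnorm_ge_l.
have [->|Tpos] := eqVneq T 0; first by rewrite sqrtr0.
have {}Tpos : 0 < T by rewrite lt_def Tpos T0.
apply: (le_of_mul_lt1 (sqrtr_ge0 _) S0) => t t0 t1.
have [y [sy y1 cw ty]] := exists_almost_norming t0 t1 Tpos.
have s1 : Sigma_norm N 0 y <= 1.
  apply: le_trans (Sigma_norm_le 0 sy) _.
  by rewrite normr0 add0r -sqrtr1 ler_sqrt.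
apply: le_trans (Sigma_dnorm_ge sy s1); rewrite (dual_elt0 dx) add0r.
exact: le_trans ty (ler_norm _).
Qed.

End DualNorm.

End SigmaNorm.

Theorem lemma2p2 (R : realType) (X : completeNormedModType R)
  (Y : nat -> completeNormedModType R) (N : forall k, X -> Y k -> R)
  (HN : forall k, sum_norm (N k)) :
  (* (A) *)
  (forall (x : X) (y : forall k, Y k), in_Sigma y ->
     Num.max `|x| (2^-1 * Num.sqrt (rsum (fun k => `|y k| ^+ 2)))
       <= Sigma_norm N x y
     /\ Sigma_norm N x y <= `|x| + Num.sqrt (rsum (fun k => `|y k| ^+ 2)))
  /\
  (* (A), "in particular": ||.||_Sigma is equivalent to the l^2-sum norm *)
  (exists c C : R, 0 < c /\ 0 < C /\
     forall (x : X) (y : forall k, Y k), in_Sigma y ->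
       c * l2sum_norm x y <= Sigma_norm N x y /\ Sigma_norm N x y <= C * l2sum_norm x y)
  /\
  (* (B) *)
  (forall (xs : X -> R) (ys : forall k, Y k -> R),
     dual_elt xs -> (forall k, dual_elt (ys k)) ->
     summable_nn (fun k => dnorm (ys k) ^+ 2) ->
     Num.max (dnorm xs) (Num.sqrt (rsum (fun k => dnorm (ys k) ^+ 2)))
       <= Sigma_dnorm N xs ys
     /\ Sigma_dnorm N xs ys
       <= dnorm xs + 2 * Num.sqrt (rsum (fun k => dnorm (ys k) ^+ 2))).
Proof.
split; [|split].
- move=> x y sy; split; last exact: Sigma_norm_le.
  by rewrite ge_max Sigma_norm_ge_l // Sigma_norm_ge_r.
- exists 4^-1, 2; do 2!split => //; exact: Sigma_norm_equiv_l2sum.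
- move=> xs ys dx dys cT; split; last exact: Sigma_dnorm_le.
  by rewrite ge_max Sigma_dnorm_ge_l // Sigma_dnorm_ge_r.
Qed.
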